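(* Let $n\ge 3$ and let $t:\{2,\dots,n-1\}\to[0,\infty)$ be arbitrary (the time to evaluate all coalitions of each size). For $S\subseteq\{2,\dots,n-1\}$ put $T(S)=\sum_{s\in S}t(s)$. Call a pair $(S_1,S_2)$ of subsets of $\{2,\dots,n-1\}$ covering if every integer partition of $n$ is reachable from $[n]$ in $G_{S_1\cup\{n\}}$ or in $G_{S_2\cup\{n\}}$. Then $$\min_{(S_1,S_2)\ \text{covering}}\ \max\big(T(S_1),T(S_2)\big)\;\le\;T\big(\{2,3,\dots,\lfloor 2n/3\rfloor\}\big),$$ i.e., the run time of CDP with the pair of size sets chosen by the SSD procedure (a covering pair minimizing $\max(T(S_1),T(S_2))$) is at most the run time of IDP, which evaluates the sizes $\{2,3,\dots,\lfloor 2n/3\rfloor,n\}$.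
   Context: Restricted integer partition graph: for a set $S\subseteq\{2,\dots,n\}$, $G_S$ is the directed graph whose nodes are the integer partitions of $n$ (multisets of positive integers summing to $n$), with an edge from $P$ to $P'$ whenever $P'$ is obtained from $P$ by replacing a single part $x$ of $P$ with $x\in S$ by two positive parts $x_1,x_2$ with $x_1+x_2=x$. The node $[n]$ is the partition with one part. The run time of a pair of size sets is the maximum of the run times of its two sets (they are processed in parallel), and the run time of a size set is the sum of the per-size evaluation times; size $n$ is always evaluated and size $1$ never, so they are excluded from $T$. *)

From HB Require Import structures.
From mathcomp Require Import all_boot all_order all_algebra.
From Stdlib Require Import Relations.Relation_Operators.
Set Implicit Arguments. Unset Strict Implicit. Unset Printing Implicit Defensive.
Import Order.TTheory GRing.Theory Num.Theory.

(* An integer partition of n, represented as a sequence of positive parts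
   summing to n; partitions are multisets, so sequences are compared up to
   permutation (perm_eq). *)
Definition is_partition (n : nat) (P : seq nat) : bool :=
  all (fun x => 0 < x) P && (sumn P == n).

(* Edge of G_A (A = set of splittable part sizes): replace one part x with
   x \in A by two positive parts x1, x2 with x1 + x2 = x. *)
Definition split_step (A : pred nat) (P Q : seq nat) : Prop :=
  exists x x1 x2 : nat,
    [/\ x \in P, A x, (0 < x1) && (0 < x2), x1 + x2 = x
      & perm_eq Q (x1 :: x2 :: rem x P)].

Definition reachable (A : pred nat) (n : nat) (Q : seq nat) : Prop :=
  exists Q', perm_eq Q Q' /\ clos_refl_trans _ (split_step A) [:: n] Q'.

Definition with_n (n : nat) (S : {set 'I_n}) : pred nat :=
  fun x => (x == n) || [exists i in S, val i == x].

Definition sizes_ok (n : nat) (S : {set 'I_n}) : bool :=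
  [forall i in S, 2 <= val i].

Definition covering (n : nat) (S1 S2 : {set 'I_n}) : Prop :=
  forall P, is_partition n P ->
    reachable (with_n S1) n P \/ reachable (with_n S2) n P.

Definition runtime (R : realFieldType) (n : nat) (t : nat -> R)
  (S : {set 'I_n}) : R := (\sum_(i in S) t (val i))%R.

From HB Require Import structures.
From mathcomp Require Import all_boot all_order all_algebra.
From Stdlib Require Import Relations.Relation_Operators Relations.Operators_Properties.
From mathcomp Require Import zify.
Import Order.TTheory GRing.Theory Num.Theory.
Set Implicit Arguments. Unset Strict Implicit.

(* IDP's own size set S = {2, ..., floor(2n/3)} already reaches every
   partition P of n, so the pair (S, S) is covering and its run time is that
   of IDP.  If P has at least two parts, its parts can be grouped into two
   blocks B and C, each either a single part or of sum at most 2n/3: take a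
   part x >= n/3 alone if there is one, and otherwise the shortest prefix of
   P of sum >= n/3 (its sum stays below 2n/3 since every part is < n/3).
   One split turns [n] into [sum B; sum C], and a block of sum m <= 2n/3 is
   then refined by peeling off one part at a time, which only ever splits
   sizes in {2, ..., m}. *)

Lemma perm_rem (T : eqType) (x : T) (s s' : seq T) :
  x \in s -> perm_eq s s' -> perm_eq (rem x s) (rem x s').
Proof.
move=> xs ss'; have xs' : x \in s' by rewrite -(perm_mem ss').
rewrite -(perm_cons x); apply: perm_trans (perm_to_rem xs').
by apply: perm_trans ss'; rewrite perm_sym perm_to_rem.
Qed.

Lemma rem_catl (T : eqType) (x : T) (s1 s2 : seq T) :
  x \in s1 -> rem x (s1 ++ s2) = rem x s1 ++ s2.
Proof.
elim: s1 => //= y s1 IHs; rewrite in_cons.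
by case: eqVneq => //= _ xs1; rewrite IHs.
Qed.

Lemma sumn_gt0 P : all (fun x => 0 < x) P -> P != [::] -> 0 < sumn P.
Proof. by case: P => //= p P /andP[p0 _] _; rewrite addn_gt0 p0. Qed.

Section Reachability.

Variable A : pred nat.

Local Notation steps := (clos_refl_trans _ (split_step A)).

Lemma split_step_perm P P' Q Q' :
  perm_eq P P' -> perm_eq Q Q' -> split_step A P Q -> split_step A P' Q'.
Proof.
move=> pP pQ [x [x1 [x2 [xP Ax pos sx pQx]]]].
exists x, x1, x2; split=> //; first by rewrite -(perm_mem pP).
rewrite perm_sym in pQ; apply: perm_trans pQ (perm_trans pQx _).
by rewrite !perm_cons perm_rem.
Qed.

Lemma split_step_catr P Q c : split_step A P Q -> split_step A (P ++ c) (Q ++ c).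
Proof.
move=> [x [x1 [x2 [xP Ax pos sx pQ]]]].
exists x, x1, x2; split=> //; first by rewrite mem_cat xP.
by rewrite rem_catl // -!cat_cons perm_cat2r.
Qed.

Lemma steps_catr P Q c : steps P Q -> steps (P ++ c) (Q ++ c).
Proof.
elim=> [P' Q' st | P' | P1 P2 P3 _ IH12 _ IH23].
- exact/rt_step/split_step_catr.
- exact: rt_refl.
- exact: rt_trans IH12 IH23.
Qed.

Lemma steps_perml P P' Q :
  perm_eq P P' -> steps P Q -> exists2 Q', perm_eq Q Q' & steps P' Q'.
Proof.
move=> pP /clos_rt_rt1n_iff [|P1 Q1 st1 rest]; first by exists P'; last exact: rt_refl.
exists Q1 => //; apply: rt_trans (rt_step _ _ _ _ _) (clos_rt1n_rt _ _ _ _ rest).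
exact: split_step_perm pP (perm_refl P1) st1.
Qed.

Definition reach P Q := exists Q', perm_eq Q Q' /\ steps P Q'.

Lemma reach_refl P : reach P P.
Proof. by exists P; split; last exact: rt_refl. Qed.

Lemma reach_step P Q : split_step A P Q -> reach P Q.
Proof. by exists Q; split; last exact: rt_step. Qed.

Lemma reach_trans P Q R : reach P Q -> reach Q R -> reach P R.
Proof.
move=> [Q' [pQ PQ]] [R' [pR QR]].
have [R'' pR' Q'R] := steps_perml pQ QR.
by exists R''; split; [apply: perm_trans pR' | apply: rt_trans Q'R].
Qed.

Lemma reach_perml P P' Q : perm_eq P P' -> reach P Q -> reach P' Q.
Proof.
move=> pP [Q' [pQ PQ]]; have [Q'' pQ' P'Q] := steps_perml pP PQ.
by exists Q''; split; first exact: perm_trans pQ'.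
Qed.

Lemma reach_permr P Q Q' : perm_eq Q Q' -> reach P Q -> reach P Q'.
Proof.
move=> pQ [Q'' [pQ' PQ]]; exists Q''; split=> //.
by apply: perm_trans pQ'; rewrite perm_sym.
Qed.

Lemma reach_catr P Q c : reach P Q -> reach (P ++ c) (Q ++ c).
Proof.
move=> [Q' [pQ PQ]]; exists (Q' ++ c).
by rewrite perm_cat2r; split; last exact: steps_catr.
Qed.

Lemma reach_cat P1 Q1 P2 Q2 :
  reach P1 Q1 -> reach P2 Q2 -> reach (P1 ++ P2) (Q1 ++ Q2).
Proof.
move=> r1 r2; apply: reach_trans (reach_catr P2 r1) _.
have pP : perm_eq (P2 ++ Q1) (Q1 ++ P2) by rewrite perm_catC.
have pQ : perm_eq (Q2 ++ Q1) (Q1 ++ Q2) by rewrite perm_catC.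
exact: reach_perml pP (reach_permr pQ (reach_catr Q1 r2)).
Qed.

Lemma reach_split2 m a b : A m -> 0 < a -> 0 < b -> a + b = m ->
  reach [:: m] [:: a; b].
Proof.
move=> Am a0 b0 abm; apply: reach_step; exists m, a, b.
by split=> //; rewrite ?inE ?a0 ?b0 //= eqxx.
Qed.

Lemma reach_parts P : all (fun x => 0 < x) P -> P != [::] ->
  (forall x, 2 <= x <= sumn P -> A x) -> reach [:: sumn P] P.
Proof.
elim: P => [|p P IHP] //= /andP[p0 posP] _ Asizes.
have [-> | nonempty] := eqVneq P [::]; first by rewrite addn0; apply: reach_refl.
have sP0 := sumn_gt0 posP nonempty.
apply: (@reach_trans _ ([:: sumn P] ++ [:: p])).
  by apply: reach_split2 => //; [apply: Asizes; lia | rewrite addnC].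
have pP : perm_eq (P ++ [:: p]) (p :: P) by rewrite perm_catC.
apply: reach_permr pP (reach_catr _ (IHP posP nonempty _)).
by move=> x hx; apply: Asizes; lia.
Qed.

End Reachability.

Definition small_block (n : nat) (B : seq nat) : bool :=
  (size B == 1) || (3 * sumn B <= 2 * n).

Lemma prefix_sum_in_middle n a P : all (fun x => 3 * x < n) P ->
  3 * a < n -> n <= 3 * (a + sumn P) ->
  exists k, n <= 3 * (a + sumn (take k P)) < 2 * n.
Proof.
elim: P a => [|x P IHP] a /=; first by lia.
move=> /andP[xn Pn] an aPn.
have [big | small] := leqP n (3 * (a + x)); first by exists 1; rewrite /= take0 /=; lia.
have [k kmid] := IHP (a + x) Pn small ltac:(lia).
by exists k.+1; rewrite /=; lia.
Qed.

Lemma balanced_split n P : 0 < n -> sumn P = n -> 1 < size P ->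
  exists B C, [/\ perm_eq P (B ++ C), B != [::], C != [::],
                  small_block n B & small_block n C].
Proof.
move=> n0 sP sizeP.
have [[x xP xbig] | ] := altP (@hasP _ (fun x => n <= 3 * x) P).
  exists [:: x], (rem x P); split=> //.
  - exact: perm_to_rem.
  - by apply: contraTneq sizeP => eP; have := size_rem xP; rewrite eP /=; lia.
  - apply/orP; right; have := perm_sumn (perm_to_rem xP); rewrite sP /=; lia.
move=> /hasPn Psmall; have Psmall' : all (fun x => 3 * x < n) P.
  by apply/allP => x /Psmall; rewrite -ltnNge.
have [k /andP[lo hi]] := @prefix_sum_in_middle n 0 P Psmall' n0 ltac:(lia).
rewrite add0n in lo hi.
have sBC : sumn (take k P) + sumn (drop k P) = n by rewrite -sumn_cat cat_take_drop.
exists (take k P), (drop k P); split; rewrite ?cat_take_drop //.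
- by apply: contraTneq lo => ->; rewrite /=; lia.
- by apply: contraTneq hi => eC; move: sBC; rewrite eC /=; lia.
- by apply/orP; right; lia.
- by apply/orP; right; lia.
Qed.

Lemma reach_small_block (A : pred nat) n B :
  (forall x, 2 <= x -> 3 * x <= 2 * n -> A x) ->
  all (fun x => 0 < x) B -> B != [::] -> small_block n B -> reach A [:: sumn B] B.
Proof.
move=> Asizes posB nB /orP[/eqP | Bsmall].
  by case: B {posB nB} => [|b []] //= _; rewrite addn0; apply: reach_refl.
by apply: reach_parts => // x hx; apply: Asizes; lia.
Qed.

Lemma reach_partition (A : pred nat) n P : 0 < n ->
  A n -> (forall x, 2 <= x -> 3 * x <= 2 * n -> A x) ->
  is_partition n P -> reach A [:: n] P.
Proof.
move=> n0 An Asizes /andP[posP /eqP sP].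
have [sizeP | sizeP] := leqP (size P) 1.
  case: P posP sP sizeP => [|p []] //= _ sP _; first by move: n0; rewrite -sP.
  by rewrite -sP addn0; apply: reach_refl.
have [B [C [pBC nB nC sB sC]]] := balanced_split n0 sP sizeP.
have := posP; rewrite (perm_all _ pBC) all_cat => /andP[posB posC].
have sBC : sumn B + sumn C = n by rewrite -sumn_cat -(perm_sumn pBC).
apply: reach_permr (_ : perm_eq (B ++ C) P) _; first by rewrite perm_sym.
apply: (@reach_trans _ _ ([:: sumn B] ++ [:: sumn C])).
  by apply: reach_split2; rewrite ?sumn_gt0.
exact: reach_cat (reach_small_block Asizes posB nB sB)
               (reach_small_block Asizes posC nC sC).
Qed.

Lemma runtime_interval (R : realFieldType) n (t : nat -> R) a b : b < n ->
  runtime t [set i : 'I_n | a <= val i <= b] = (\sum_(a <= s < b.+1) t s)%R.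
Proof.
move=> bn; rewrite /runtime (big_nat_widen _ _ n) // (big_nat_widenl _ 0) //.
by rewrite big_mkord; apply: eq_bigl => i; rewrite inE ltnS andbC.
Qed.

Theorem lemma1 (R : realFieldType) (n : nat) (t : nat -> R) :
  3 <= n ->
  (forall s, 2 <= s <= n.-1 -> (0 <= t s)%R) ->
  exists S1 S2 : {set 'I_n},
    [/\ sizes_ok S1, sizes_ok S2, covering S1 S2
      & (Num.max (runtime t S1) (runtime t S2)
           <= \sum_(2 <= s < ((2 * n) %/ 3).+1) t s)%R].
Proof.
move=> n3 _; have n0 : 0 < n by lia.
have top_lt_n : (2 * n) %/ 3 < n by rewrite ltn_divLR //; lia.
pose S := [set i : 'I_n | 2 <= val i <= (2 * n) %/ 3].
have okS : sizes_ok S by apply/forallP => i; apply/implyP; rewrite inE => /andP[].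
have Asizes x : 2 <= x -> 3 * x <= 2 * n -> with_n S x.
  move=> x2 x3; have xn : x < n by lia.
  apply/orP; right; apply/existsP; exists (Ordinal xn).
  by rewrite inE /= eqxx x2 leq_divRL //; lia.
exists S, S; split=> //.
  by move=> P partP; left; apply: reach_partition => //; rewrite /with_n eqxx.
by rewrite maxxx runtime_interval.
Qed.
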